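(* Let $n\ge1$, let $\mu,\nu\in\mathbb{R}^n$ be probability vectors, let $\gamma>0$, and let $\phi$ satisfy the Bregman assumption in the context with $\phi'_0=-\infty$. Let $\hat X,\tilde X\in U_\phi$, and let $\hat C,\tilde C\in S_h$ be the unique matrices in $S_h$ with $\mathcal{F}(\hat C)=\hat X$ and $\mathcal{F}(\tilde C)=\tilde X$. Then $$\|\hat C-\tilde C\|_\infty\le 2\gamma\,\|\phi'(\hat X)-\phi'(\tilde X)\|_\infty,$$ where $\phi'(X)$ denotes entrywise application and $\|\cdot\|_\infty$ is the maximum absolute entry.
   Context: Probability vectors have nonnegative entries summing to $1$. $\mathcal{U}(\mu,\nu):=\{X\in\mathbb{R}_+^{n\times n}: X\mathbf{1}=\mu,\ X^\top\mathbf{1}=\nu\}$. Bregman assumption on $\phi:\mathbb{R}\to(-\infty,+\infty]$: $I=\operatorname{dom}\phi$ is an interval with $(0,1)\subseteq\operatorname{int}(I)$; $\phi$ is of Legendre type (proper, closed, strictly convex on $\operatorname{int}(\operatorname{dom}\phi)$, essentially smooth); $\phi$ is $C^1$ on $\operatorname{int}(I)$. $\phi(X):=\sum_{i,j}\phi(X_{ij})$. $\mathcal{F}(C):=\arg\min_{X\in\mathcal{U}(\mu,\nu)}\{\langle C,X\rangle+\gamma\phi(X)\}$. $\phi'_0:=\lim_{x\to0^+}\phi'(x)$, $\phi'_1:=\lim_{x\to1^-}\phi'(x)$. With $\phi'_0=-\infty$: $\mathcal{T}_\phi(\mu,\nu):=\mathcal{U}(\mu,\nu)\cap(0,1]^{n\times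 n}$ if $\phi'_1$ is finite and $\mathcal{U}(\mu,\nu)\cap(0,1)^{n\times n}$ if $\phi'_1=+\infty$. $S_h:=\{C\in\mathbb{R}_+^{n\times n}: C=C^\top,\ \operatorname{diag}(C)=0\}$. $(G_\phi^\gamma(X))_{ij}:=\frac{\gamma}{2}\big(\phi'(X_{ii})+\phi'(X_{jj})-\phi'(X_{ij})-\phi'(X_{ji})\big)$, and $U_\phi:=\{X\in\mathcal{T}_\phi(\mu,\nu): (G_\phi^\gamma(X))_{ij}\ge0\ \forall i,j\}$. (It is known that $\mathcal{F}$ restricted to $S_h$ is a bijection onto $U_\phi$, so $\hat C,\tilde C$ are well defined.) *)

From HB Require Import structures.
From mathcomp Require Import all_boot all_order all_algebra.
From mathcomp Require Import all_classical all_reals all_analysis.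
Set Implicit Arguments. Unset Strict Implicit. Unset Printing Implicit Defensive.
Import Order.TTheory GRing.Theory Num.Theory.
Import numFieldNormedType.Exports.
Local Open Scope classical_set_scope.
Local Open Scope ring_scope.

Section Bregman.
Variable R : realType.

Definition edom (phi : R -> \bar R) : set R := [set x | (phi x < +oo)%E].

(* phi' : the (real) derivative of phi, meaningful on interior (edom phi) *)
Definition phid (phi : R -> \bar R) (x : R) : R := derive1 (fun y => fine (phi y)) x.

Definition proper_fun (phi : R -> \bar R) : Prop :=
  (exists x, (phi x < +oo)%E) /\ (forall x, (-oo < phi x)%E).

(* closed = lower semicontinuous *)
Definition lsc_fun (phi : R -> \bar R) : Prop :=
  forall x (a : R), (a%:E < phi x)%E -> \forall y \near x, (a%:E < phi y)%E.

Definition convex_efun (phi : R -> \bar R) : Prop :=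
  forall x y t : R, (0 < t < 1)%R ->
    (phi (t * x + (1 - t) * y)%R <= t%:E * phi x + (1 - t)%:E * phi y)%E.

Definition strictly_convex_on (A : set R) (phi : R -> \bar R) : Prop :=
  forall x y t : R, A x -> A y -> x != y -> (0 < t < 1)%R ->
    (phi (t * x + (1 - t) * y)%R < t%:E * phi x + (1 - t)%:E * phi y)%E.

(* essentially smooth (one-dimensional form of Rockafellar's definition) *)
Definition essentially_smooth (phi : R -> \bar R) : Prop :=
  let D := interior (edom phi) in
  (D !=set0) /\
  (forall x, D x -> derivable (fun y => fine (phi y)) x 1) /\
  (forall (u : R^nat) (b : R), (forall k, D (u k)) ->
      closure D b -> ~ D b -> u @ \oo --> b ->
      (fun k => `|phid phi (u k)|) @ \oo --> +oo).

Definition legendre_type (phi : R -> \bar R) : Prop :=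
  [/\ proper_fun phi, lsc_fun phi, convex_efun phi,
      strictly_convex_on (interior (edom phi)) phi & essentially_smooth phi].

Definition bregman_assumption (phi : R -> \bar R) : Prop :=
  [/\ is_interval (edom phi),
      `]0, 1[ `<=` interior (edom phi),
      legendre_type phi &
      (forall x, interior (edom phi) x -> {for x, continuous (phid phi)})].

Variable n : nat.

Definition prob_vec (mu : 'cV[R]_n) : Prop :=
  (forall i, 0 <= mu i 0) /\ \sum_i mu i 0 = 1.

Definition transport_polytope (mu nu : 'cV[R]_n) : set 'M[R]_n :=
  [set X : 'M[R]_n | (forall i j, 0 <= X i j) /\
           X *m const_mx 1 = mu /\ X^T *m const_mx 1 = nu].

Definition objective (gamma : R) (phi : R -> \bar R) (C X : 'M[R]_n) : \bar R :=
  ((\sum_i \sum_j C i j * X i j)%:E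
   + gamma%:E * \sum_i \sum_j phi (X i j))%E.

Definition F_argmin (mu nu : 'cV[R]_n) (gamma : R) (phi : R -> \bar R)
    (C : 'M[R]_n) : set 'M[R]_n :=
  [set X : 'M[R]_n | transport_polytope mu nu X /\
     forall Y, transport_polytope mu nu Y ->
       (objective gamma phi C X <= objective gamma phi C Y)%E].

Definition T_phi (mu nu : 'cV[R]_n) (phi : R -> \bar R) : set 'M[R]_n :=
  [set X : 'M[R]_n | transport_polytope mu nu X /\
     (forall i j, 0 < X i j <= 1) /\
     (phid phi x @[x --> 1^'-] --> +oo -> forall i j, X i j < 1)].

Definition S_h : set 'M[R]_n :=
  [set C : 'M[R]_n | (forall i j, 0 <= C i j) /\ C^T = C /\ forall i, C i i = 0].

Definition G_phi (gamma : R) (phi : R -> \bar R) (X : 'M[R]_n) : 'M[R]_n :=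
  \matrix_(i, j) (gamma / 2 * (phid phi (X i i) + phid phi (X j j)
                               - phid phi (X i j) - phid phi (X j i))).

Definition U_phi (mu nu : 'cV[R]_n) (gamma : R) (phi : R -> \bar R) : set 'M[R]_n :=
  [set X : 'M[R]_n | T_phi mu nu phi X /\ forall i j, 0 <= G_phi gamma phi X i j].

Definition mx_maxabs (A : 'M[R]_n) : R :=
  \big[Num.max/0]_(i < n) \big[Num.max/0]_(j < n) `|A i j|.

End Bregman.

From HB Require Import structures.
From mathcomp Require Import all_boot all_order all_algebra.
From mathcomp Require Import all_classical all_reals all_analysis.
From mathcomp Require Import zify ring lra.
Set Implicit Arguments.
Unset Strict Implicit.
Unset Printing Implicit Defensive.

Import Order.TTheory GRing.Theory Num.Theory.
Import numFieldNormedType.Exports.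
Local Open Scope classical_set_scope.
Local Open Scope ring_scope.

(** Let X be a minimizer of <C, .> + gamma phi over U(mu, nu) whose entries lie in
    (0, 1), where phi is differentiable.  Moving X along the direction
    E_ii + E_jj - E_ij - E_ji keeps both marginals, so the derivative of the
    objective in that direction vanishes:
      C_ii + C_jj - C_ij - C_ji
        + gamma (phi'(X_ii) + phi'(X_jj) - phi'(X_ij) - phi'(X_ji)) = 0.
    For C in S_h this says C = G_phi^gamma(X).  The entries of a matrix of
    T_phi(mu, nu) are positive, hence below 1 as soon as n > 1 (each row sums
    to at most 1), and for n = 1 only the diagonal, where both sides vanish,
    occurs.  So C^ - C~ = G(X^) - G(X~), each entry of which is gamma/2 times
    a signed sum of four entries of phi'(X^) - phi'(X~). *)

Section MaxAbs.
Variables (R : realType) (n : nat).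
Implicit Types A : 'M[R]_n.

Lemma mx_maxabs_ge0 A : 0 <= mx_maxabs A.
Proof.
rewrite /mx_maxabs; elim/big_ind: _ => [//|x y x0 y0|i _].
  by rewrite le_max x0.
by elim/big_ind: _ => [//|x y x0 y0|j _]; rewrite ?le_max ?x0.
Qed.

Lemma normr_le_mx_maxabs A i j : `|A i j| <= mx_maxabs A.
Proof.
apply: le_trans (le_bigmax _ _ i).
exact: (le_bigmax _ (fun j => `|A i j|) j).
Qed.

Lemma mx_maxabs_le A c :
  0 <= c -> (forall i j, `|A i j| <= c) -> mx_maxabs A <= c.
Proof. by move=> c0 Ac; apply: bigmax_le => // i _; apply: bigmax_le. Qed.

End MaxAbs.

Section SwapMatrix.
Context {R : comPzRingType} {n : nat}.
Implicit Types i j : 'I_n.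

Definition swap_mx i j : 'M[R]_n :=
  delta_mx i i + delta_mx j j - delta_mx i j - delta_mx j i.

Lemma trmx_swap_mx i j : (swap_mx i j)^T = swap_mx i j.
Proof. by rewrite !raddfB raddfD /= !trmx_delta addrAC. Qed.

Lemma mulmx_delta_const1 m (a : 'I_m) (b : 'I_n) :
  delta_mx a b *m const_mx 1 = delta_mx a 0 :> 'cV[R]_m.
Proof.
apply/matrixP => k z; rewrite !mxE (bigD1 b) //= big1 ?addr0.
  by rewrite !mxE !eqxx ord1 eqxx !andbT mulr1.
by move=> l lb; rewrite !mxE (negbTE lb) andbF mul0r.
Qed.

Lemma swap_mx_row_sums i j : swap_mx i j *m (const_mx 1 : 'cV[R]_n) = 0.
Proof.
by rewrite !mulmxDl !mulNmx !mulmx_delta_const1 (addrC (delta_mx i 0)) addrK subrr.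
Qed.

Lemma sum_mul_delta (A : 'I_n -> 'I_n -> R) i j :
  \sum_k \sum_l A k l * delta_mx i j k l = A i j.
Proof.
rewrite (bigD1 i) //= [X in _ + X]big1 ?addr0 => [|k ki].
  rewrite (bigD1 j) //= [X in _ + X]big1 ?addr0 => [|l lj].
    by rewrite mxE !eqxx mulr1.
  by rewrite mxE (negbTE lj) andbF mulr0.
by apply: big1 => l _; rewrite mxE (negbTE ki) mulr0.
Qed.

Lemma sum_mul_swap_mx (A : 'I_n -> 'I_n -> R) i j :
  \sum_k \sum_l A k l * swap_mx i j k l = A i i + A j j - A i j - A j i.
Proof.
rewrite -!sum_mul_delta -!sumrN -!big_split /=; apply: eq_bigr => k _.
rewrite -!sumrN -!big_split /=; apply: eq_bigr => l _.
by rewrite !mxE; ring.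
Qed.

End SwapMatrix.

Lemma is_derive_affine (R : realType) (a d s : R) :
  is_derive s 1 (fun u : R => a + u * d) d.
Proof. by apply: is_derive_eq; rewrite scaler0 !add0r mul1r; apply: mulr1. Qed.

Lemma cvg_affine (R : realType) (a d : R) :
  (fun u : R => a + u * d) @ (0 : R) --> a.
Proof.
rewrite -[X in _ --> X]addr0 -[X in _ --> a + X](mul0r d).
by apply: cvgD; [exact: cvg_cst | apply: cvgM; [exact: cvg_id | exact: cvg_cst]].
Qed.

Section Stationarity.
Variables (R : realType) (phi : R -> \bar R).
Hypothesis bphi : bregman_assumption phi.

Let psi (y : R) : R := fine (phi y).

Lemma bregman_interior_01 y : 0 < y < 1 -> interior (edom phi) y.
Proof. by case: bphi => _ sub01 _ _ y01; apply: sub01; rewrite /= in_itv. Qed.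

Lemma bregman_fineK_01 y : 0 < y < 1 -> phi y = (psi y)%:E.
Proof.
case: bphi => _ _ [[_ phi_gt_ninfty] _ _ _ _] _ /bregman_interior_01/interior_subset.
by rewrite /psi => phiy; rewrite fineK // fin_numElt phi_gt_ninfty.
Qed.

Lemma bregman_derivable_01 y : 0 < y < 1 -> derivable psi y 1.
Proof.
by case: bphi => _ _ [_ _ _ _ [_ [der _]]] _ /bregman_interior_01; apply: der.
Qed.

Variables (n : nat) (mu nu : 'cV[R]_n) (gamma : R) (C X D : 'M[R]_n).
Hypothesis Xopt : F_argmin mu nu gamma phi C X.
Hypothesis X01 : forall k l, 0 < X k l < 1.
Hypotheses (Drow : D *m (const_mx 1 : 'cV_n) = 0)
           (Dcol : D^T *m (const_mx 1 : 'cV_n) = 0).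

Let in01 (Y : 'M[R]_n) := forall k l, 0 < Y k l < 1.

Let cost : R -> R := \sum_(k < n) \sum_(l < n)
  (fun u => C k l * (X k l + u * D k l) + gamma * psi (X k l + u * D k l)).

Lemma line_in01_near0 : \forall u \near 0, in01 (X + u *: D).
Proof.
apply: (@filter_forall _ _ (fun k u => forall l, 0 < (X + u *: D) k l < 1)
  (nbhs (0 : R))) => k.
apply: (@filter_forall _ _ (fun l u => 0 < (X + u *: D) k l < 1)
  (nbhs (0 : R))) => l.
have [X0 X1] := andP (X01 k l).
near=> u; rewrite !mxE; apply/andP; split; near: u.
  exact: (cvgr_gt _ (@cvg_affine _ (X k l) (D k l)) _ X0).
exact: (cvgr_lt _ (@cvg_affine _ (X k l) (D k l)) _ X1).
Unshelve. all: by end_near.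
Qed.

Lemma line_transport u :
  in01 (X + u *: D) -> transport_polytope mu nu (X + u *: D).
Proof.
case: Xopt => [[_ [Xrow Xcol]] _] Y01; split.
  by move=> k l; case/andP: (Y01 k l) => /ltW.
split; first by rewrite mulmxDl -scalemxAl Drow scaler0 addr0.
by rewrite raddfD /= linearZ /= mulmxDl -scalemxAl Dcol scaler0 addr0.
Qed.

Lemma objective_line u :
  in01 (X + u *: D) -> objective gamma phi C (X + u *: D) = (cost u)%:E.
Proof.
move=> Y01; rewrite /objective.
have -> : (\sum_k \sum_l phi ((X + u *: D) k l) =
           (\sum_k \sum_l psi ((X + u *: D) k l))%:E)%E.
  rewrite -sumEFin; apply: eq_bigr => k _; rewrite -sumEFin.
  by apply: eq_bigr => l _; apply: bregman_fineK_01.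
rewrite -EFinM -EFinD /cost fct_sumE mulr_sumr -big_split /=.
congr EFin; apply: eq_bigr => k _; rewrite fct_sumE mulr_sumr -big_split /=.
by apply: eq_bigr => l _; rewrite !mxE.
Qed.

Lemma is_derive_cost u : in01 (X + u *: D) ->
  is_derive u 1 cost
    (\sum_k \sum_l (C k l + gamma * phid phi (X k l + u * D k l)) * D k l).
Proof.
move=> Y01; apply: is_derive_sum => k; apply: is_derive_sum => l.
have Yder : derivable psi (X k l + u * D k l) 1.
  by apply: bregman_derivable_01; have := Y01 k l; rewrite !mxE.
have line_der := is_derive_affine (X k l) (D k l) u.
have psi_der := @is_derive1_comp _ psi _ u _ _ (derivableP Yder) line_der.
have := is_deriveD (is_deriveZ (C k l) line_der) (is_deriveZ gamma psi_der).
suff -> : (C k l + gamma * phid phi (X k l + u * D k l)) * D k l =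
   C k l *: D k l + gamma *: ('D_1 psi (X k l + u * D k l) * D k l) by [].
by rewrite /phid derive1E /psi mulrDl -mulrA.
Qed.

Lemma argmin_stationary :
  \sum_k \sum_l (C k l + gamma * phid phi (X k l)) * D k l = 0.
Proof.
have [e e0 ball_in01] := (nbhs_ballP _ _).1 line_in01_near0.
have in01_itv u : u \in `]-e, e[ -> in01 (X + u *: D).
  rewrite in_itv /= => u_itv; apply: ball_in01.
  by rewrite /ball /= sub0r normrN ltr_norml.
have X0 : X + 0 *: D = X by rewrite scale0r addr0.
have cost_min u : u \in `]-e, e[ -> cost 0 <= cost u.
  move=> /in01_itv Yu; rewrite -lee_fin -objective_line ?X0 // -objective_line //.
  by case: Xopt => _ Xmin; apply: Xmin; apply: line_transport.
have der0 : is_derive (0 : R) 1 cost 0.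
  apply: derive1_at_min cost_min.
  - by apply: (@le_trans _ _ 0); rewrite ?oppr_le0 ltW.
  - by move=> u /in01_itv /is_derive_cost [].
  - by rewrite in_itv /= oppr_lt0 e0.
have := @is_derive_cost 0; rewrite X0 => /(_ X01) der0'.
rewrite -[RHS](derive_val (is_derive := der0)) (derive_val (is_derive := der0')).
by apply: eq_bigr => k _; apply: eq_bigr => l _; rewrite mul0r addr0.
Qed.

End Stationarity.

Lemma argmin_cost_eq_G_offdiag (R : realType) n (mu nu : 'cV[R]_n) gamma phi
    (C X : 'M[R]_n) i j :
  bregman_assumption phi -> S_h C -> F_argmin mu nu gamma phi C X ->
  (forall k l, 0 < X k l < 1) -> i != j -> C i j = G_phi gamma phi X i j.
Proof.
move=> bphi [_ [CT Cdiag]] Xopt X01 ij.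
have swap_col_sums : (swap_mx i j)^T *m (const_mx 1 : 'cV[R]_n) = 0.
  by rewrite trmx_swap_mx swap_mx_row_sums.
have := argmin_stationary bphi Xopt X01 (swap_mx_row_sums i j) swap_col_sums.
have Cji : C j i = C i j by have := congr1 (fun M : 'M[R]_n => M i j) CT; rewrite mxE.
by rewrite sum_mul_swap_mx !Cdiag Cji mxE => ?; lra.
Qed.

Lemma transport_entry_lt1 (R : realType) n (mu nu : 'cV[R]_n) (X : 'M[R]_n) :
  (1 < n)%N -> prob_vec mu -> transport_polytope mu nu X ->
  (forall k l, 0 < X k l) -> forall k l, X k l < 1.
Proof.
move=> n_gt1 [mu_ge0 mu_sum1] [X_ge0 [Xrow _]] X_gt0 k l.
have [l' l'_neq_l] : exists l' : 'I_n, l' != l.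
  have h : ((l == 0 :> nat) < n)%N by case: (l == 0 :> nat); lia.
  by exists (Ordinal h); apply/eqP => /(congr1 val) /=; case: eqP => [-> | ne /esym].
have mu_row : mu k 0 = \sum_m X k m.
  by rewrite -Xrow mxE; apply: eq_bigr => m _; rewrite mxE mulr1.
have mu_le1 : mu k 0 <= 1.
  by rewrite -mu_sum1 (bigD1 k) //= lerDl sumr_ge0.
have : X k l + X k l' <= mu k 0.
  by rewrite mu_row (bigD1 l) //= lerD2l (bigD1 l') //= lerDl sumr_ge0.
by have := X_gt0 k l'; lra.
Qed.

Lemma argmin_cost_eq_G (R : realType) n (mu nu : 'cV[R]_n) gamma phi
    (C X : 'M[R]_n) :
  prob_vec mu -> bregman_assumption phi -> S_h C ->
  F_argmin mu nu gamma phi C X -> T_phi mu nu phi X -> C = G_phi gamma phi X.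
Proof.
move=> pmu bphi SC Xopt [tX [X01 _]]; apply/matrixP => i j.
have [<-|ij] := eqVneq i j.
  by case: SC => _ [_ ->]; rewrite mxE addrK subrr mulr0.
apply: (argmin_cost_eq_G_offdiag bphi SC Xopt _ ij) => k l.
have n_gt1 : (1 < n)%N.
  by move: (ltn_ord i) (ltn_ord j) ij; rewrite -val_eqE /=; lia.
have [-> _] := andP (X01 k l).
by rewrite (transport_entry_lt1 n_gt1 pmu tX) // => a b; case/andP: (X01 a b).
Qed.

Lemma mx_maxabs_G_phi_sub (R : realType) n gamma phi (X Y : 'M[R]_n) :
  0 <= gamma ->
  mx_maxabs (G_phi gamma phi X - G_phi gamma phi Y) <=
    2 * gamma * mx_maxabs (map_mx (phid phi) X - map_mx (phid phi) Y).
Proof.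
move=> gamma_ge0; set P := map_mx _ X - _; set M := mx_maxabs P.
have PM k l : `|P k l| <= M := normr_le_mx_maxabs P k l.
apply: mx_maxabs_le => [|i j]; first by rewrite !mulr_ge0 ?mx_maxabs_ge0.
have -> : (G_phi gamma phi X - G_phi gamma phi Y) i j =
    gamma / 2 * (P i i + P j j - P i j - P j i) by rewrite /P !mxE; ring.
have : `|P i i + P j j - P i j - P j i| <= 4 * M.
  have -> : 4 * M = M + M + M + M by ring.
  apply: le_trans (ler_normB _ _) _; apply: lerD => //.
  apply: le_trans (ler_normB _ _) _; apply: lerD => //.
  by apply: le_trans (ler_normD _ _) _; apply: lerD.
rewrite normrM ger0_norm ?divr_ge0 // (_ : 2 * gamma * M = gamma / 2 * (4 * M)).
  by apply: ler_wpM2l; rewrite ?divr_ge0.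
by field.
Qed.

Theorem proposition4 (R : realType) (n : nat) (mu nu : 'cV[R]_n) (gamma : R)
    (phi : R -> \bar R) (Xh Xt Ch Ct : 'M[R]_n) :
  (0 < n)%N -> prob_vec mu -> prob_vec nu -> 0 < gamma ->
  bregman_assumption phi ->
  phid phi x @[x --> 0^'+] --> -oo ->
  U_phi mu nu gamma phi Xh -> U_phi mu nu gamma phi Xt ->
  S_h Ch -> S_h Ct ->
  F_argmin mu nu gamma phi Ch = [set Xh] ->
  F_argmin mu nu gamma phi Ct = [set Xt] ->
  mx_maxabs (Ch - Ct) <=
    2 * gamma * mx_maxabs (map_mx (phid phi) Xh - map_mx (phid phi) Xt).
Proof.
move=> _ pmu _ gamma_gt0 bphi _ [Th _] [Tt _] Sh St Fh Ft.
have Xh_opt : F_argmin mu nu gamma phi Ch Xh by rewrite Fh.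
have Xt_opt : F_argmin mu nu gamma phi Ct Xt by rewrite Ft.
rewrite (argmin_cost_eq_G pmu bphi Sh Xh_opt Th).
rewrite (argmin_cost_eq_G pmu bphi St Xt_opt Tt).
exact: mx_maxabs_G_phi_sub (ltW gamma_gt0).
Qed.
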